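(* Let $G$ be a graph of order $n\ge 9$. If $\tau(G)\le \frac{n}{2}$, then $\beta_p(G)\le n-3$.
   Context: All graphs are finite, simple, undirected and connected. Two vertices $u,v$ are twins if $N(u)\setminus\{v\}=N(v)\setminus\{u\}$; this is an equivalence relation whose classes are called twin classes, and the twin number $\tau(G)$ is the maximum cardinality of a twin class. For a partition $\Pi=\{S_1,\dots,S_k\}$ of $V(G)$, $r(u|\Pi)=(d(u,S_1),\dots,d(u,S_k))$ with $d(u,S)=\min_{w\in S}d(u,w)$; $\Pi$ is locating if $r(u|\Pi)\ne r(v|\Pi)$ for all distinct $u,v$; $\beta_p(G)$ (partition dimension) is the minimum size of a locating partition. *)

From mathcomp Require Import all_boot all_order.
Set Implicit Arguments. Unset Strict Implicit. Unset Printing Implicit Defensive.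

Section Graph.
Variables (T : finType) (e : rel T).

Definition simple_graph := symmetric e /\ irreflexive e.
Definition connected_graph := forall u v : T, connect e u v.

Definition nbhd (u : T) : {set T} := [set w | e u w].

Fixpoint ball (k : nat) (u : T) : {set T} :=
  match k with
  | 0 => [set u]
  | k'.+1 => ball k' u :|: [set y | [exists x in ball k' u, e x y]]
  end.

(* graph distance: least k with v in ball k u (distances in a connected
   graph on #|T| vertices are < #|T|; index in iota 0 _ equals the value) *)
Definition gdist (u v : T) : nat := find (fun k => v \in ball k u) (iota 0 #|T|).

Definition dist_set (u : T) (S : {set T}) : nat :=
  \big[minn/#|T|]_(w in S) gdist u w.

Definition twins (u v : T) : bool := (nbhd u :\ v) == (nbhd v :\ u).

Definition twin_class (u : T) : {set T} := [set v | twins u v].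

Definition twin_number : nat := \max_(u : T) #|twin_class u|.

(* locating partition: r(u|P) <> r(v|P) for distinct u v, i.e. some class
   S in P distinguishes them by distance *)
Definition locating (P : {set {set T}}) : bool :=
  partition P [set: T] &&
  [forall u : T, forall v : T,
     (u != v) ==> [exists S in P, dist_set u S != dist_set v S]].

Definition partition_dim : nat :=
  \big[minn/#|T|.+1]_(P : {set {set T}} | locating P) #|P|.

End Graph.

(* Merging three disjoint pairs {x_i, y_i} and keeping all other vertices as
   singletons gives a partition with n - 3 blocks.  It is locating as soon as
   each pair is split by a vertex w_i outside the pairs, adjacent to exactly
   one of x_i, y_i: the singleton {w_i} is then at distance 1 from exactly one
   of them, and vertices of different blocks differ at distance 0.
   If some vertex has three neighbours and three non-neighbours, it splits
   three such pairs.  Otherwise every vertex w is adjacent to exactly, or to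
   all but, a set M w of at most two vertices.  When the sets M w cover at most
   four vertices, the n - 4 > n/2 uncovered ones are pairwise twins.  When they
   cover at least five, a case analysis on the sizes of the M w yields a set W
   of vertices whose sets M w contain three vertices outside W, while W and
   these sets together have at most six elements; the vertices of W then split
   three pairs formed from covered and uncovered vertices. *)

From HB Require Import structures.
From mathcomp Require Import all_boot all_order.
From mathcomp Require Import zify.
Set Implicit Arguments. Unset Strict Implicit. Unset Printing Implicit Defensive.

(* Lets bigD1 and the other semigroup big-operator lemmas act on the minima
   defining dist_set and partition_dim. *)
HB.instance Definition _ := SemiGroup.isComLaw.Build nat minn minnA minnC.

Section Locating.
Variables (T : finType) (e : rel T).
Hypothesis e_sym : symmetric e.
Hypothesis T_gt1 : 1 < #|T|.

Lemma gdist_eq0 u v : (gdist e u v == 0) = (v == u).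
Proof. by rewrite /gdist; case: #|T| T_gt1 => // n _ /=; rewrite inE; case: (v == u). Qed.

Lemma gdist_eq1 u v : v != u -> (gdist e u v == 1) = e u v.
Proof.
move=> /negbTE vu; rewrite /gdist; case: #|T| T_gt1 => [|[|n]] // _ /=.
rewrite !inE vu /=; have -> : [exists x in [set u], e x v] = e u v.
  by apply/existsP/idP => [[x /andP[/set1P -> //]]|uv]; exists u; rewrite inE eqxx.
by case: (e u v).
Qed.

Lemma dist_set_eq0 u (S : {set T}) : u \in S -> dist_set e u S = 0.
Proof.
have uu : gdist e u u = 0 by apply/eqP; rewrite gdist_eq0.
by move=> uS; rewrite /dist_set (bigD1 u) //= uu min0n.
Qed.

Lemma dist_set_gt0 u (S : {set T}) : u \notin S -> 0 < dist_set e u S.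
Proof.
move=> uS; apply: (big_ind (fun m => 0 < m)) => [|m k|w wS]; first exact: ltnW.
  by rewrite leq_min => -> ->.
by rewrite lt0n gdist_eq0; apply: contraNneq uS => <-.
Qed.

Lemma dist_set1_eq1 u w : u != w -> (dist_set e u [set w] == 1) = e w u.
Proof.
move=> uw; rewrite /dist_set big_set1E e_sym -gdist_eq1; last by rewrite eq_sym.
by apply/eqP/eqP; lia.
Qed.

Lemma partition_dim_le_locating P : locating e P -> partition_dim e <= #|P|.
Proof. by move=> locP; rewrite /partition_dim (bigD1 P) // geq_minl. Qed.

Lemma partition_dim_le_fibres (rT : finType) (f : T -> rT) :
  (forall u v, u != v -> f u = f v ->
     exists2 w, (forall z, f z = f w -> z = w) & e w u != e w v) ->
  partition_dim e <= #|f @: [set: T]|.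
Proof.
move=> split_fibres; pose fibre x := [set y in [set: T] | f x == f y].
have fibre_in x : fibre x \in preim_partition f [set: T] by apply: imset_f.
apply: leq_trans (partition_dim_le_locating (P := preim_partition f [set: T]) _) _.
  rewrite /locating preim_partitionP; apply/forallP => u; apply/forallP => v.
  apply/implyP => uv; apply/existsP; have [fuv|fuv] := eqVneq (f u) (f v).
    have [w fibre_w wuv] := split_fibres u v uv fuv.
    have fibre1 : fibre w = [set w].
      by apply/setP => z; rewrite !inE; apply/eqP/eqP => [/esym/fibre_w|->].
    have uw : u != w by apply: contraNneq uv => uw; rewrite uw [v]fibre_w // -fuv uw.
    have vw : v != w by apply: contraNneq uv => vw; rewrite vw [u]fibre_w // fuv vw.
    exists [set w]; rewrite -fibre1 fibre_in /= fibre1.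
    by apply: contra wuv => /eqP duv; rewrite -dist_set1_eq1 // duv dist_set1_eq1.
  exists (fibre u); rewrite fibre_in /= dist_set_eq0 ?inE ?eqxx //.
  by rewrite eq_sym -lt0n dist_set_gt0 // !inE.
have -> : preim_partition f [set: T] = (fun t => [set y in [set: T] | t == f y]) @: (f @: [set: T]).
  by rewrite -imset_comp.
exact: leq_imset_card.
Qed.

Definition distinguished (X Y : {set T}) :=
  {in X, forall x, exists2 w, w \notin X :|: Y & {in Y, forall y, e w x != e w y}}.

Section Pairing.
Variables (X Y : {set T}) (xs ys : seq T).
Hypothesis dXY : distinguished X Y.
Hypothesis xsX : {subset xs <= X}.
Hypothesis ysY : {subset ys <= Y}.
Hypothesis uniq_xs : uniq xs.
Hypothesis size_xs_ys : size xs = size ys.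

(* With default v, pair_with is the identity outside ys. *)
Let pair_with v := nth v xs (index v ys).

Lemma pair_with_out v : v \notin ys -> pair_with v = v.
Proof. by move=> vys; rewrite /pair_with nth_default // memNindex // size_xs_ys. Qed.

Lemma index_lt_size_xs v : v \in ys -> index v ys < size xs.
Proof. by rewrite size_xs_ys index_mem. Qed.

Lemma pair_with_in v : v \in ys -> pair_with v \in X.
Proof. by move=> vys; rewrite xsX // mem_nth // index_lt_size_xs. Qed.

Lemma pair_with_inj : {in ys &, injective pair_with}.
Proof.
move=> u v uys vys; rewrite /pair_with (set_nth_default v) ?index_lt_size_xs // => /eqP.
by rewrite nth_uniq ?index_lt_size_xs // => /eqP /(congr1 (nth u ys)); rewrite !nth_index.
Qed.

Lemma pair_with_split u v : u \in ys -> v \notin ys -> pair_with u = pair_with v ->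
  exists2 w, (forall z, pair_with z = pair_with w -> z = w) & e w u != e w v.
Proof.
move=> uys vys; rewrite (pair_with_out vys) => fuv.
have /dXY[w] : v \in X by rewrite -fuv pair_with_in.
rewrite in_setU negb_or => /andP[wX wY] sep; exists w; last by rewrite eq_sym sep ?ysY.
have wys : w \notin ys by apply: contra wY; exact: ysY.
move=> z; rewrite (pair_with_out wys); have [zys fz|zys] := boolP (z \in ys).
  by move: (pair_with_in zys); rewrite fz (negbTE wX).
by rewrite pair_with_out.
Qed.

Lemma partition_dim_le_pairing : uniq ys -> partition_dim e <= #|T| - size ys.
Proof.
move=> uniq_ys; apply: leq_trans (partition_dim_le_fibres (f := pair_with) _) _.
  move=> u v uv fuv; have [uys|uys] := boolP (u \in ys); have [vys|vys] := boolP (v \in ys).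
  - by rewrite (pair_with_inj uys vys fuv) eqxx in uv.
  - exact: pair_with_split.
  - by have [w fw wvu] := pair_with_split vys uys (esym fuv); exists w; rewrite // eq_sym.
  - by rewrite -(pair_with_out uys) -(pair_with_out vys) fuv eqxx in uv.
have sub : pair_with @: [set: T] \subset ~: [set y in ys].
  apply/subsetP => _ /imsetP[v _ ->]; rewrite !inE; have [vys|vys] := boolP (v \in ys).
    have [w _ sep] := dXY (pair_with_in vys).
    by apply/negP => /ysY /sep; rewrite eqxx.
  by rewrite pair_with_out.
apply: leq_trans (subset_leq_card sub) _.
by rewrite cardsCs setCK cardsE (card_uniqP uniq_ys).
Qed.

End Pairing.

Lemma partition_dim_le_distinguished (X Y : {set T}) :
  2 < #|X| -> 2 < #|Y| -> distinguished X Y -> partition_dim e <= #|T| - 3.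
Proof.
move=> X_gt2 Y_gt2 dXY; have size_take3 (A : {set T}) : 2 < #|A| -> size (take 3 (enum A)) = 3.
  by move=> A_gt2; rewrite size_takel // -cardE.
rewrite -(size_take3 Y) //; apply: (partition_dim_le_pairing (X := X) (xs := take 3 (enum X))).
- exact: dXY.
- by move=> x /mem_take; rewrite mem_enum.
- by move=> y /mem_take; rewrite mem_enum.
- by rewrite take_uniq ?enum_uniq.
- by rewrite !size_take3.
- by rewrite take_uniq ?enum_uniq.
Qed.

End Locating.

Section SmallSets.
Variable T : finType.
Implicit Types (A B : {set T}) (x y z : T).

Lemma card_setU_le A B : #|A :|: B| <= #|A| + #|B|.
Proof. by rewrite cardsU leq_subr. Qed.

Lemma card_set2_le x y : #|[set x; y]| <= 2.
Proof. by rewrite cards2; case: (x != y). Qed.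

Lemma card_set3_le x y z : #|[set x; y; z]| <= 3.
Proof. by apply: leq_trans (card_setU_le _ _) _; rewrite cards1 addn1 ltnS card_set2_le. Qed.

Lemma card_setC_ge A k : #|A| <= k -> #|T| - k <= #|~: A|.
Proof. by rewrite -(cardsC A); lia. Qed.

Lemma card_setD_ge A B : #|A| - #|B| <= #|A :\: B|.
Proof. by rewrite cardsD leq_sub2l // subset_leq_card // subsetIr. Qed.

End SmallSets.

(* An abstract graph in which w is adjacent to exactly the vertices of M w if
   ~~ h w, and to exactly those outside M w :|: [set w] if h w; M_xor is what
   the symmetry of adjacency says about M and h. *)
Section ExceptionalSets.
Variables (T : finType) (M : T -> {set T}) (h : T -> bool).
Hypothesis M_irr : forall w, w \notin M w.
Hypothesis M_le2 : forall w, #|M w| <= 2.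
Hypothesis M_xor : forall w z, w != z -> (z \in M w) (+) (w \in M z) = h w (+) h z.
Hypothesis T_ge9 : 9 <= #|T|.

Definition cover_of (W : {set T}) := \bigcup_(w in W) M w.

(* 6 = 9 - 3 leaves three vertices outside W and its cover. *)
Definition witness_set (W : {set T}) :=
  (2 < #|cover_of W :\: W|) && (#|W :|: cover_of W| <= 6).

Lemma M_sym w z : h w = h z -> (z \in M w) = (w \in M z).
Proof.
move=> hwz; have [-> //|wz] := eqVneq w z.
by move: (M_xor wz); rewrite hwz addbb; case: (z \in M w); case: (w \in M z).
Qed.

Lemma M_asym w z : h w != h z -> (z \in M w) = ~~ (w \in M z).
Proof.
move=> hwz; have wz : w != z by apply: contraNneq hwz => ->.
by move: (M_xor wz) hwz; case: (h w); case: (h z); case: (z \in M w); case: (w \in M z).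
Qed.

Lemma witness_pair w1 w2 :
  2 < #|(M w1 :|: M w2) :\: [set w1; w2]| -> witness_set [set w1; w2].
Proof.
rewrite /witness_set; have -> : cover_of [set w1; w2] = M w1 :|: M w2.
  by rewrite /cover_of bigcup_setU !big_set1.
move=> -> /=.
have := card_setU_le [set w1; w2] (M w1 :|: M w2); have := card_setU_le (M w1) (M w2).
by have := card_set2_le w1 w2; have := M_le2 w1; have := M_le2 w2; lia.
Qed.

Section TwoExceptions.
Variables a b c : T.
Hypothesis Mb : M b = [set a; c].
Hypothesis ac : a != c.
Hypothesis pairs_small : forall w1 w2, #|(M w1 :|: M w2) :\: [set w1; w2]| <= 2.
Hypothesis cover_gt4 : 4 < #|cover_of [set: T]|.

Let Z := (M a :|: M c) :\: [set a; c].

Lemma b_neq_a : b != a.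
Proof. by apply: contraNneq (M_irr b) => ba; rewrite Mb ba !inE eqxx. Qed.

Lemma b_neq_c : b != c.
Proof. by apply: contraNneq (M_irr b) => bc; rewrite Mb bc !inE eqxx orbT. Qed.

Lemma M_outside_abc u v : u \notin [set a; b; c] -> v \in M u -> v \in [set a; b; c].
Proof.
move=> uK vMu; apply: contraTT (pairs_small b u) => vK; rewrite -ltnNge.
have vu : v != u by apply: contraNneq (M_irr u) => vu; rewrite -{1}vu.
move: uK vK; rewrite !inE !negb_or => /andP[/andP[ua ub] uc] /andP[/andP[va vb] vc].
apply/card_gt2P; exists a, c, v; rewrite !inE Mb !inE !eqxx vMu !orbT !andbT !negb_or.
rewrite (eq_sym a b) b_neq_a (eq_sym c b) b_neq_c vb vu ac.
by rewrite (eq_sym a u) ua (eq_sym c u) uc (eq_sym c v) vc va.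
Qed.

Lemma M_ac_sub : M a :|: M c \subset [set a; b; c] :|: Z.
Proof.
apply/subsetP => t tM; rewrite /Z in_setU in_setD tM andbT !inE.
by case: (t == a); case: (t == c); rewrite ?orbT.
Qed.

Lemma Z_le2 : #|Z| <= 2.
Proof. exact: pairs_small. Qed.

Lemma cover_sub_abcZ : cover_of [set: T] \subset [set a; b; c] :|: Z.
Proof.
apply/subsetP => t /bigcupP[s _ tMs]; rewrite in_setU.
have [sK|sK] := boolP (s \in [set a; b; c]); last by rewrite (M_outside_abc sK tMs).
have [//|tK] := boolP (t \in [set a; b; c]).
move: sK tK tMs; rewrite !inE => /orP[/orP[]|] /eqP-> tK tMs /=.
- by rewrite tMs andbT; apply: contra tK => /orP[] ->; rewrite ?orbT.
- by move: tMs tK; rewrite Mb !inE => /orP[] ->; rewrite ?orbT.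
- by rewrite tMs orbT andbT; apply: contra tK => /orP[] ->; rewrite ?orbT.
Qed.

Lemma cover_not_sub_acZ : ~~ (cover_of [set: T] \subset [set a; c] :|: Z).
Proof.
apply/negP => /subset_leq_card; have := card_setU_le [set a; c] Z.
by have := card_set2_le a c; have := Z_le2; lia.
Qed.

Lemma Z_ge2 : 2 <= #|Z|.
Proof.
have := subset_leq_card cover_sub_abcZ; have := card_setU_le [set a; b; c] Z.
by have := card_set3_le a b c; lia.
Qed.

Lemma b_notin_Z : b \notin Z.
Proof.
apply: contraNN cover_not_sub_acZ => bZ; apply: subset_trans cover_sub_abcZ _.
apply/subsetP => t; rewrite !in_setU => /orP[|->]; last by rewrite orbT.
by move: bZ; rewrite !inE -orbA => bZ /or3P[] /eqP->; rewrite ?eqxx ?bZ ?orbT.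
Qed.

Lemma exists_b_in_M : exists u, b \in M u.
Proof.
have /bigcupP[u _ bMu] : b \in cover_of [set: T]; last by exists u.
apply: contraR cover_not_sub_acZ => bT; apply/subsetP => t tT.
move: (subsetP cover_sub_abcZ t tT); rewrite !in_setU => /orP[|->]; last by rewrite orbT.
rewrite !inE -orbA => /or3P[] /eqP tE; rewrite tE ?eqxx ?orbT //.
by move: bT; rewrite -tE tT.
Qed.

Lemma witness_set_through u : b \in M u -> u \notin Z -> witness_set [set a; c; u].
Proof.
move=> bMu uZ; have ub : u != b by apply: contraNneq (M_irr b) => ub; rewrite -{2}ub.
have uac : u \notin [set a; c].
  apply: contra b_notin_Z; rewrite !inE negb_or b_neq_a b_neq_c /=.
  by case/orP => /eqP <-; rewrite bMu ?orbT.
have uK : u \notin [set a; b; c] by move: uac; rewrite !inE (negbTE ub) orbF.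
rewrite /witness_set; have -> : cover_of [set a; c; u] = M a :|: M c :|: M u.
  by rewrite /cover_of !bigcup_setU !big_set1.
apply/andP; split.
  have sub : b |: Z \subset (M a :|: M c :|: M u) :\: [set a; c; u].
    apply/subsetP => t; rewrite in_setU1 => /orP[/eqP->|tZ].
      by rewrite !inE bMu orbT andbT !negb_or b_neq_a b_neq_c (eq_sym b u) ub.
    have tu : t != u by apply: contraNneq uZ => <-.
    by move: tZ; rewrite !inE (negbTE tu) orbF => /andP[-> ->].
  apply: leq_trans (subset_leq_card sub); rewrite cardsU1 b_notin_Z.
  by have := Z_ge2; lia.
have sub : [set a; c; u] :|: (M a :|: M c :|: M u) \subset [set a; b; c] :|: [set u] :|: Z.
  apply/subsetP => t; rewrite in_setU => /orP[|].
    by rewrite !inE -orbA => /or3P[] /eqP->; rewrite eqxx ?orbT.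
  rewrite in_setU => /orP[/(subsetP M_ac_sub)|/(M_outside_abc uK)].
    by rewrite !in_setU => /orP[] ->; rewrite ?orbT.
  by rewrite !in_setU => ->.
apply: leq_trans (subset_leq_card sub) _.
have := card_setU_le ([set a; b; c] :|: [set u]) Z; have := card_setU_le [set a; b; c] [set u].
by have := card_set3_le a b c; have := Z_le2; rewrite cards1; lia.
Qed.

Lemma outside_in_M u u' :
  b \in M u -> u \in Z -> u' \notin [set a; b; c] :|: Z -> b \notin M u' -> u' \in M u.
Proof.
move=> bMu uZ; rewrite in_setU negb_or => /andP[u'K u'Z] bMu'.
have ub : u != b by apply: contraNneq b_notin_Z => <-.
have u'b : u' != b by apply: contraNneq u'K => ->; rewrite !inE eqxx orbT.
have uu' : u != u' by apply: contraNneq u'Z => <-.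
have uMb : u \notin M b by move: uZ; rewrite Mb !inE; case: (_ || _).
have uK : u \notin [set a; b; c].
  by move: uZ; rewrite !inE (negbTE ub) orbF => /andP[].
have u'Mb : u' \notin M b by apply: contra u'K; rewrite Mb !inE => /orP[] ->; rewrite ?orbT.
have uMu' : u \notin M u' by apply: contra uK; exact: M_outside_abc u'K.
move: (M_xor u'b) (M_xor ub) (M_xor uu').
rewrite bMu (negbTE uMb) (negbTE bMu') (negbTE u'Mb) (negbTE uMu').
by case: (h u); case: (h b); case: (h u'); case: (u' \in M u).
Qed.

Lemma witness_of_two_exceptions : exists W, witness_set W.
Proof.
have [u bMu] := exists_b_in_M.
have [uZ|uZ] := boolP (u \in Z); last by exists [set a; c; u]; exact: witness_set_through.
have [u' /andP[u'K bMu']|none] :=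
  pickP (fun u' => (u' \notin [set a; b; c] :|: Z) && (b \in M u')).
  exists [set a; c; u']; apply: witness_set_through => //.
  by move: u'K; rewrite in_setU negb_or => /andP[].
have sub : ~: ([set a; b; c] :|: Z) \subset M u.
  apply/subsetP => u'; rewrite in_setC => u'K; apply: outside_in_M => //.
  by move: (none u'); rewrite u'K => /negbT.
have := subset_leq_card sub; have := card_setC_ge (card_setU_le [set a; b; c] Z).
by have := card_set3_le a b c; have := Z_le2; have := M_le2 u; lia.
Qed.

End TwoExceptions.

Section OneException.
Hypothesis M_le1 : forall w, #|M w| <= 1.
Hypothesis cover_gt4 : 4 < #|cover_of [set: T]|.

Lemma M_le1_eq w x y : x \in M w -> y \in M w -> x = y.
Proof. by move=> xM yM; apply/esym/(card_le1_eqP (M_le1 w)). Qed.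

Lemma minority_unique beta b1 b2 :
  2 < #|[set v | h v == beta]| -> h b1 != beta -> h b2 != beta -> b1 = b2.
Proof.
move=> A_gt2 hb1 hb2; apply: contraTeq A_gt2 => b12; rewrite -leqNgt.
have sub : [set v | h v == beta] \subset M b1 :|: M b2.
  apply/subsetP => l; rewrite !inE => /eqP hl; apply: contraR b12.
  rewrite negb_or => /andP[lb1 lb2].
  have b1l : b1 \in M l by rewrite M_asym ?hl // eq_sym.
  have b2l : b2 \in M l by rewrite M_asym ?hl // eq_sym.
  by rewrite (M_le1_eq b1l b2l).
apply: leq_trans (subset_leq_card sub) _; have := card_setU_le (M b1) (M b2).
by have := M_le1 b1; have := M_le1 b2; lia.
Qed.

Lemma h_const beta : 4 < #|[set v | h v == beta]| -> forall v, h v = beta.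
Proof.
move=> A_gt4 b0; apply/eqP; apply: contraTT cover_gt4 => hb0; rewrite -leqNgt.
have A_gt2 : 2 < #|[set v | h v == beta]| by lia.
have sub : cover_of [set: T] \subset b0 |: M b0.
  apply/subsetP => t /bigcupP[s _ tMs]; rewrite in_setU1.
  have [-> //|tb0] := eqVneq t b0; have [<- //|sb0] := eqVneq s b0.
  have majority x : x != b0 -> h x = beta.
    by move=> xb0; apply/eqP; apply: contraNT xb0 => hx; rewrite (minority_unique A_gt2 hx hb0).
  have hs := majority s sb0; have ht := majority t tb0.
  have sMt : s \in M t by rewrite -M_sym // hs ht.
  apply: contraR sb0 => tMb0; have b0Mt : b0 \in M t by rewrite M_asym ?ht // eq_sym.
  by rewrite (M_le1_eq sMt b0Mt).
have := subset_leq_card sub; rewrite cardsU1; have := M_le1 b0.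
by case: (b0 \notin _); lia.
Qed.

Lemma h_majority : exists beta, 4 < #|[set v | h v == beta]|.
Proof.
have [A_gt4|A_le4] := ltnP 4 #|[set v | h v == true]|; first by exists true.
exists false; have -> : [set v | h v == false] = ~: [set v | h v == true].
  by apply/setP => v; rewrite !inE; case: (h v).
by have := cardsC [set v | h v == true]; lia.
Qed.

Lemma witness_of_one_exception : exists W, witness_set W.
Proof.
have [beta /h_const h_beta] := h_majority.
have M_symm s t : (t \in M s) = (s \in M t) by rewrite M_sym // !h_beta.
have pair_disjoint s t s' t' :
    t \in M s -> t' \in M s' -> t' \notin [set s; t] -> s' \notin [set s; t].
  move=> tMs t'Ms'; apply: contra; rewrite !inE => /orP[]/eqP E; subst s'.
    by rewrite (M_le1_eq tMs t'Ms') eqxx orbT.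
  by rewrite M_symm in tMs; rewrite (M_le1_eq tMs t'Ms') eqxx.
have pick_outside (B : {set T}) : #|B| <= 4 -> exists2 t, t \notin B & exists s, t \in M s.
  move=> B_le4; have : 0 < #|cover_of [set: T] :\: B|.
    by apply: leq_trans (card_setD_ge _ _); lia.
  by case/card_gt0P => t; rewrite in_setD => /andP[tB /bigcupP[s _ tMs]]; exists t => //; exists s.
have /pick_outside[t1 _ [s1 t1Ms1]] : #|set0 : {set T}| <= 4 by rewrite cards0.
have [t2 t2P1 [s2 t2Ms2]] := pick_outside _ (leq_trans (card_set2_le s1 t1) (isT : 2 <= 4)).
have s2P1 := pair_disjoint _ _ _ _ t1Ms1 t2Ms2 t2P1.
have /pick_outside[t3] : #|[set s1; t1] :|: [set s2; t2]| <= 4.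
  have := card_setU_le [set s1; t1] [set s2; t2].
  by have := card_set2_le s1 t1; have := card_set2_le s2 t2; lia.
rewrite in_setU negb_or => /andP[t3P1 t3P2] [s3 t3Ms3].
have s3P1 := pair_disjoint _ _ _ _ t1Ms1 t3Ms3 t3P1.
have s3P2 := pair_disjoint _ _ _ _ t2Ms2 t3Ms3 t3P2.
have ts s t : t \in M s -> t != s by move=> tMs; apply: contraNneq (M_irr s) => ts; rewrite -{1}ts.
move: (ts _ _ t1Ms1) (ts _ _ t2Ms2) (ts _ _ t3Ms3) s2P1 s3P1 s3P2 t2P1 t3P1 t3P2.
rewrite !inE !negb_or => t1s1 t2s2 t3s3.
move=> /andP[s2s1 s2t1] /andP[s3s1 s3t1] /andP[s3s2 s3t2].
move=> /andP[t2s1 t2t1] /andP[t3s1 t3t1] /andP[t3s2 t3t2].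
exists [set s1; s2; s3]; rewrite /witness_set.
have -> : cover_of [set s1; s2; s3] = M s1 :|: M s2 :|: M s3.
  by rewrite /cover_of !bigcup_setU !big_set1.
apply/andP; split.
  apply/card_gt2P; exists t1, t2, t3; rewrite !inE t1Ms1 t2Ms2 t3Ms3 !orbT !andbT !negb_or.
  by rewrite t1s1 t2s1 t3s1 t2s2 t3s2 t3s3 (eq_sym t1 s2) s2t1 (eq_sym t1 s3) s3t1
    (eq_sym t2 s3) s3t2 (eq_sym t1 t2) t2t1 (eq_sym t2 t3) t3t2 t3t1.
have := card_setU_le [set s1; s2; s3] (M s1 :|: M s2 :|: M s3).
have := card_setU_le (M s1 :|: M s2) (M s3); have := card_setU_le (M s1) (M s2).
have := card_set3_le s1 s2 s3; have := M_le1 s1; have := M_le1 s2; have := M_le1 s3.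
clear; lia.
Qed.

End OneException.

Lemma witness_set_exists : 4 < #|cover_of [set: T]| -> exists W, witness_set W.
Proof.
move=> cover_gt4.
have [[w1 w2] /= big|pairs_small] :=
  pickP (fun p : T * T => 2 < #|(M p.1 :|: M p.2) :\: [set p.1; p.2]|).
  by exists [set w1; w2]; exact: witness_pair.
have [b /cards2P[a [c [ac Mb]]]|M_le1] := pickP (fun b => #|M b| == 2).
  apply: (witness_of_two_exceptions Mb ac _ cover_gt4) => w1 w2.
  by rewrite leqNgt (pairs_small (w1, w2)).
apply: witness_of_one_exception cover_gt4 => w.
by have := M_le2 w; have := M_le1 w; case: #|M w| => [|[|[|]]].
Qed.

End ExceptionalSets.

Section Exceptions.
Variables (T : finType) (e : rel T).
Hypothesis e_sym : symmetric e.
Hypothesis e_irr : irreflexive e.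

Lemma distinguished_nbhd w : distinguished e (nbhd e w) (~: (w |: nbhd e w)).
Proof.
move=> x; rewrite inE => ewx; exists w; first by rewrite !inE eqxx e_irr.
by move=> y; rewrite !inE negb_or => /andP[_ /negbTE->]; rewrite ewx.
Qed.

Definition dense w := 2 < #|nbhd e w|.

Definition exceptions w := if dense w then ~: (w |: nbhd e w) else nbhd e w.

Lemma exceptions_irr w : w \notin exceptions w.
Proof. by rewrite /exceptions; case: ifP; rewrite !inE ?eqxx ?e_irr. Qed.

Lemma adj_exceptions w z : z != w -> e w z = (z \in exceptions w) (+) dense w.
Proof.
by move=> /negbTE zw; rewrite /exceptions; case: ifP; rewrite !inE ?zw ?addbT ?addbF ?negbK.
Qed.

Lemma exceptions_le2 :
  (forall w, dense w -> #|~: (w |: nbhd e w)| <= 2) -> forall w, #|exceptions w| <= 2.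
Proof.
by move=> sparse_co w; rewrite /exceptions; case: ifPn => [/sparse_co|]; rewrite // -leqNgt.
Qed.

Lemma exceptions_xor w z :
  w != z -> (z \in exceptions w) (+) (w \in exceptions z) = dense w (+) dense z.
Proof.
move=> wz; move: (e_sym w z); rewrite !adj_exceptions // 1?eq_sym //.
by case: (z \in _); case: (w \in _); case: (dense w); case: (dense z).
Qed.

Lemma distinguished_cover W :
  distinguished e (cover_of exceptions W :\: W) (~: (W :|: cover_of exceptions W)).
Proof.
move=> x; rewrite in_setD => /andP[xW /bigcupP[w wW xMw]].
exists w; first by rewrite !inE wW.
move=> y; rewrite !inE negb_or => /andP[yW yC].
have yMw : y \notin exceptions w by apply: contra yC => yMw; apply/bigcupP; exists w.
have xw : x != w by apply: contraNneq xW => ->.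
have yw : y != w by apply: contraNneq yW => ->.
by rewrite !adj_exceptions // xMw (negbTE yMw); case: (dense w).
Qed.

Lemma twin_class_large (T_ge5 : 4 < #|T|) :
  #|cover_of exceptions [set: T]| <= 4 -> exists u, #|T| - 4 <= #|twin_class e u|.
Proof.
(* An uncovered vertex is adjacent exactly to the dense vertices other than
   itself, so uncovered vertices are pairwise twins. *)
move=> cover_le4; have out_ge := card_setC_ge cover_le4.
have [o oO] : exists o, o \in ~: cover_of exceptions [set: T].
  by apply/card_gt0P; lia.
have adj_out x z : x \in ~: cover_of exceptions [set: T] -> z != x -> e x z = dense z.
  move=> xO zx; rewrite e_sym adj_exceptions 1?eq_sym //.
  suff /negbTE-> : x \notin exceptions z by [].
  by apply: contraTN xO => xMz; rewrite inE negbK; apply/bigcupP; exists z.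
exists o; apply: leq_trans out_ge (subset_leq_card _); apply/subsetP => o' o'O.
rewrite inE /twins; apply/eqP/setP => z; rewrite !inE.
have [->|zo] := eqVneq z o; first by rewrite e_irr andbF.
have [->|zo'] := eqVneq z o'; first by rewrite e_irr andbF.
by rewrite (adj_out o) // (adj_out o').
Qed.

End Exceptions.

Theorem theorem14 (T : finType) (e : rel T) :
  simple_graph e -> connected_graph e ->
  9 <= #|T| ->
  (twin_number e * 2 <= #|T|)%N ->
  (partition_dim e <= #|T| - 3)%N.
Proof.
move=> [e_sym e_irr] _ T_ge9 twin_le; have T_gt1 : 1 < #|T| by lia.
have [w /andP[nbhd_gt2 non_gt2]|sparse] :=
  pickP (fun w => (2 < #|nbhd e w|) && (2 < #|~: (w |: nbhd e w)|)).
  exact: partition_dim_le_distinguished nbhd_gt2 non_gt2 (distinguished_nbhd e_irr (w := w)).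
have exceptions_small : forall w, #|exceptions e w| <= 2.
  apply: exceptions_le2 => w; rewrite /dense => dw.
  by move: (sparse w); rewrite /= dw /= => /negbT; rewrite -leqNgt.
have [cover_gt4|cover_le4] := ltnP 4 #|cover_of (exceptions e) [set: T]|.
  have [W /andP[cover_gt2 W_le6]] :=
    witness_set_exists (exceptions_irr e_irr) exceptions_small (exceptions_xor e_sym)
      T_ge9 cover_gt4.
  apply: partition_dim_le_distinguished cover_gt2 _ (distinguished_cover (W := W)) => //.
  by apply: leq_trans (card_setC_ge W_le6); lia.
have [u twin_ge] := twin_class_large e_sym e_irr (leq_trans (isT : 5 <= 9) T_ge9) cover_le4.
by have := @leq_bigmax T (fun u => #|twin_class e u|) u; rewrite -/(twin_number e); lia.
Qed.
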